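(* Let $n$ be a positive integer. If $l_2(n)=2^{k+1}s+\frac{1-(-2)^k}{3}$ for some nonnegative integer $k$ and integer $s$, then $l_2(n+1)=3^{k+1}s+\frac{1-(-3)^k}{2}$.
   Context: For a positive integer $m$, the triangle $T_m$ is an array whose row $x$ ($x=1,2,\dots$) has $x$ entries, in columns $0,\dots,x-1$. Row $1$ is the single entry $1$. For $x>1$, row $x$ is obtained from row $x-1$ by rotating it cyclically left by $m$ positions (the entry in column $c$ of row $x-1$ moves to column $(c-m)\bmod(x-1)\in\{0,\dots,x-2\}$ of row $x$), then appending in column $x-1$ a new entry equal to $1$ plus the entry in column $0$ of row $x-1$. $T_m(x,c)$ denotes the entry in row $x$, column $c$. Define $l_m(1)=1$ and, for $n\ge2$, $l_m(n)=\min\{x>l_m(n-1): T_m(x,0)=1\}$. Here $m=2$ (in $T_2$ the value $1$ heads infinitely many rows, so $l_2(n)$ is defined for all $n$). *)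

From mathcomp Require Import all_boot all_algebra.
Set Implicit Arguments. Unset Strict Implicit. Unset Printing Implicit Defensive.

(* Row x of the triangle T_m, as the sequence of its entries in columns
   0..x-1.  Row 0 is a dummy (empty) row. *)
Fixpoint Trow (m x : nat) : seq nat :=
  match x with
  | 0 => [::]
  | 1 => [:: 1]
  | x'.+1 => let r := Trow m x' in rot (m %% x') r ++ [:: (head 0 r).+1]
  end.

Definition T (m x c : nat) : nat := nth 0 (Trow m x) c.

Definition is_l (m : nat) (L : nat -> nat) : Prop :=
  L 1 = 1 /\
  forall n, 2 <= n ->
    [/\ L n.-1 < L n, T m (L n) 0 = 1 &
        forall x, L n.-1 < x < L n -> T m x 0 <> 1].

(** Write [p x] ([pos1 2 x] below) for the column of the entry 1 in row [x]
    of [T_2]; it occurs exactly once, every other entry being a successor.  The rotation gives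
    [p (x+1) = (p x - 2) mod x], so between two zeros of [p] the position of
    the 1 descends by 2 at each row.  After a zero at [x] it restarts at [x - 2].
    When the descent hits 0 we have the next zero; when it hits 1 it restarts at
    [y - 2] in the next row [y].  Tracking [v = y - 1] across these restarts,
    an even [v] is sent to [3v/2] and an odd [v] produces the zero [(3v + 1)/2].
    Hence if [3 l(n) = 2^(k+1) w + 1] with [w] odd, the next zero is
    [(3^(k+1) w + 1)/2], while an even [l(n)] is followed by [3 l(n)/2]; these
    are the closed forms of the theorem for [k >= 1] and [k = 0]. *)

From mathcomp Require Import all_boot all_order all_algebra zify.
Import Order.TTheory GRing.Theory Num.Theory.

Set Implicit Arguments.
Unset Strict Implicit.
Unset Printing Implicit Defensive.

Lemma nth_rot (T : Type) (x0 : T) (s : seq T) n i :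
  n < size s -> i < size s ->
  nth x0 (rot n s) i = nth x0 s ((i + n) %% size s).
Proof.
move=> ltn lti; rewrite /rot nth_cat size_drop.
case: (ltnP i (size s - n)) => hi.
  by rewrite nth_drop modn_small 1?addnC //; lia.
rewrite nth_take; last by lia.
have -> : i + n = (i + n - size s) + size s by lia.
by rewrite modnDr modn_small; [congr nth; lia | lia].
Qed.

(* [(p + x - m %% x) %% x] is [(p - m) mod x] without truncated subtraction. *)
Fixpoint pos1 (m x : nat) : nat :=
  match x with
  | 0 | 1 => 0
  | x'.+1 => (pos1 m x' + x' - m %% x') %% x'
  end.

Lemma pos1S m x : 0 < x -> pos1 m x.+1 = (pos1 m x + x - m %% x) %% x.
Proof. by case: x. Qed.

Lemma TrowS m x : 0 < x ->
  Trow m x.+1 = rot (m %% x) (Trow m x) ++ [:: (head 0 (Trow m x)).+1].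
Proof. by case: x. Qed.

Lemma size_Trow m x : size (Trow m x) = x.
Proof.
elim: x => // x IH; case: (posnP x) => [-> // | x_gt0].
by rewrite TrowS // size_cat size_rot IH addn1.
Qed.

Lemma pos1_lt m x : 0 < x -> pos1 m x < x.
Proof.
case: x => // x _; case: (posnP x) => [-> // | x_gt0].
by rewrite pos1S // ltnS ltnW // ltn_mod.
Qed.

Lemma nth_Trow_gt0 m x i : i < x -> 0 < nth 0 (Trow m x) i.
Proof.
elim: x i => // x IH i lti; case: (posnP x) => [x0 | x_gt0].
  by move: lti; rewrite x0 ltnS leqn0 => /eqP ->.
rewrite TrowS // nth_cat size_rot size_Trow.
case: (ltnP i x) => hi; last by rewrite (_ : i - x = 0) //; lia.
by rewrite nth_rot size_Trow ?ltn_mod // IH // ltn_mod.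
Qed.

Lemma nth_Trow_eq1 m x i : i < x -> (nth 0 (Trow m x) i == 1) = (i == pos1 m x).
Proof.
elim: x i => // x IH i lti; case: (posnP x) => [x0 | x_gt0].
  by move: lti; rewrite x0 ltnS leqn0 => /eqP ->.
have lt_m : m %% x < x by rewrite ltn_mod.
have lt_p := pos1_lt m x_gt0.
rewrite TrowS // pos1S // nth_cat size_rot size_Trow.
case: (ltnP i x) => hi.
  rewrite nth_rot size_Trow // IH ?ltn_mod //.
  have shift : ((pos1 m x + x - m %% x) %% x + m %% x) %% x = pos1 m x.
    by rewrite modnDml subnK ?modnDr ?(modn_small lt_p) //; lia.
  by rewrite -{1}shift eqn_modDr modn_mod (modn_small hi).
have i_eq : i = x by lia.
by rewrite i_eq subnn /= -nth0 eqSS !gtn_eqF ?nth_Trow_gt0 ?ltn_mod.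
Qed.

Lemma T_eq1 m x : 0 < x -> T m x 0 = 1 <-> pos1 m x = 0.
Proof.
move=> x_gt0; rewrite /T.
have e : (nth 0 (Trow m x) 0 == 1) = (pos1 m x == 0) by rewrite nth_Trow_eq1 // eq_sym.
by split=> [/eqP | p0]; [rewrite e => /eqP | apply/eqP; rewrite e p0].
Qed.

Definition first_zero_from m y z :=
  [/\ pos1 m z = 0, y <= z & forall w, y <= w < z -> pos1 m w <> 0].

Lemma is_l_gt0 m L n : is_l m L -> 0 < n -> 0 < L n.
Proof.
case=> L1 Ln; case: n => // [[|n]] _; first by rewrite L1.
by have [] := Ln n.+2 isT; lia.
Qed.

Lemma pos1_is_l m L n : is_l m L -> 0 < n -> pos1 m (L n) = 0.
Proof.
move=> hL; case: n => // [[|n]] _; first by case: hL => ->.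
have [_ T1 _] := hL.2 n.+2 isT.
by apply/T_eq1 => //; apply: is_l_gt0 hL _.
Qed.

Lemma is_l_first_zero m L n z :
  is_l m L -> 0 < n -> first_zero_from m (L n).+1 z -> L n.+1 = z.
Proof.
move=> hL n_gt0 [z0 le_z no0]; have [/= lt_L T1 /= noT1] := hL.2 n.+1 (n_gt0 : 1 < n.+1).
have L_gt0 := is_l_gt0 hL n_gt0.
case: (ltngtP (L n.+1) z) => // [lt_Lz | lt_zL].
- by case: (no0 (L n.+1)); [lia | apply/T_eq1 => //; lia].
- by case: (noT1 z); [lia | apply/T_eq1 => //; lia].
Qed.

Lemma pos1_descent x j :
  0 < x -> 2 * j <= pos1 2 x -> pos1 2 (x + j) = pos1 2 x - 2 * j.
Proof.
move=> x_gt0; elim: j => [|j IH] le_j; first by rewrite addn0 subn0.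
have lt_p : pos1 2 (x + j) < x + j by apply: pos1_lt; lia.
rewrite IH in lt_p; last by lia.
rewrite addnS pos1S ?IH ?(modn_small (_ : 2 < x + j)); try lia.
have -> : pos1 2 x - 2 * j + (x + j) - 2 = pos1 2 x - 2 * j.+1 + (x + j) by lia.
by rewrite modnDr modn_small //; lia.
Qed.

Lemma first_zero_from_even y h :
  0 < y -> pos1 2 y = 2 * h -> first_zero_from 2 y (y + h).
Proof.
move=> y_gt0 py; split=> [|| w /andP [le_w lt_w]].
- by rewrite pos1_descent ?py ?subnn.
- exact: leq_addr.
- by rewrite -(subnKC le_w) pos1_descent ?py; lia.
Qed.

Lemma first_zero_from_odd y h z : 0 < y -> pos1 2 y = (2 * h).+1 ->
  first_zero_from 2 (y + h).+1 z -> first_zero_from 2 y z.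
Proof.
move=> y_gt0 py [z0 le_z no0]; split=> // [|w /andP [le_w lt_w]]; first by lia.
case: (leqP w (y + h)) => le_wh; last by apply: no0; lia.
by rewrite -(subnKC le_w) pos1_descent ?py; lia.
Qed.

Lemma pos1_odd_run y h : 0 < y -> pos1 2 y = (2 * h).+1 ->
  pos1 2 (y + h).+1 = y + h - 1.
Proof.
move=> y_gt0 py; have lt_p := pos1_lt 2 y_gt0.
rewrite pos1S ?pos1_descent ?py; try lia.
rewrite (_ : (2 * h).+1 - 2 * h = 1); last by lia.
case: (ltnP 2 (y + h)) => [lt2 | le2].
  by rewrite (modn_small lt2) modn_small; lia.
by rewrite (_ : y + h = 2); lia.
Qed.

Lemma pos1_after_zero x : 0 < x -> pos1 2 x = 0 -> pos1 2 x.+1 = x - 2.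
Proof.
move=> x_gt0 p0; rewrite pos1S // p0 add0n.
case: (ltnP 2 x) => [lt2 | le2]; first by rewrite (modn_small lt2) modn_small; lia.
by case: x x_gt0 {p0} le2 => [|[|[|]]].
Qed.

Lemma first_zero_from_pow2 m w : odd w ->
  pos1 2 (2 ^ m * w).+1 = 2 ^ m * w - 1 ->
  first_zero_from 2 (2 ^ m * w).+1 ((3 ^ m.+1 * w).+1 %/ 2).
Proof.
elim: m w => [|m IH] w odd_w pv.
  rewrite expn0 mul1n in pv *.
  have -> : (3 ^ 1 * w).+1 %/ 2 = w.+1 + (w - 1) %/ 2 by lia.
  by apply: first_zero_from_even; lia.
have v_gt0 : 0 < 2 ^ m * w by rewrite muln_gt0 expn_gt0; case: w odd_w {pv}.
rewrite expnS -mulnA in pv *; set v := 2 ^ m * w in v_gt0 pv *.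
have pv' : pos1 2 (2 * v).+1 = (2 * (v - 1)).+1 by rewrite pv; lia.
apply: (first_zero_from_odd (ltn0Sn _) pv').
have -> : ((2 * v).+1 + (v - 1)).+1 = (2 ^ m * (3 * w)).+1.
  by rewrite mulnCA -/v; lia.
rewrite expnSr -mulnA; apply: IH; first by rewrite oddM odd_w.
rewrite mulnCA -/v; have -> : (3 * v).+1 = ((2 * v).+1 + (v - 1)).+1 by lia.
by rewrite (pos1_odd_run _ pv'); lia.
Qed.

Lemma first_zero_after_even u :
  0 < u -> pos1 2 (2 * u) = 0 -> first_zero_from 2 (2 * u).+1 (3 * u).
Proof.
move=> u_gt0 p0; have -> : 3 * u = (2 * u).+1 + (u - 1) by lia.
by apply: first_zero_from_even => //; rewrite pos1_after_zero //; lia.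
Qed.

Lemma first_zero_after_odd x m w : pos1 2 x = 0 -> odd w ->
  3 * x = 2 ^ m.+1 * w + 1 ->
  first_zero_from 2 x.+1 ((3 ^ m.+1 * w).+1 %/ 2).
Proof.
move=> p0 odd_w; rewrite expnS -mulnA; set v := 2 ^ m * w => e3x.
suff [pv reach] : pos1 2 v.+1 = v - 1 /\
    forall z, first_zero_from 2 v.+1 z -> first_zero_from 2 x.+1 z.
  by apply: reach; apply: first_zero_from_pow2.
case: (ltnP x 2) => [lt_x2 | le_2x].
  have v1 : v = 1 by lia.
  have x1 : x = 1 by lia.
  by rewrite v1 x1.
have px : pos1 2 x.+1 = (2 * ((x - 3) %/ 2)).+1 by rewrite pos1_after_zero //; lia.
have -> : v.+1 = (x.+1 + (x - 3) %/ 2).+1 by lia.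
split; last by move=> z; apply: first_zero_from_odd px.
by rewrite pos1_odd_run //; lia.
Qed.

Local Open Scope ring_scope.

Lemma dvdz_1subX (c : int) n : (1 - c %| 1 - c ^+ n)%Z.
Proof. by rewrite -[X in (_ %| X - _)%Z](expr1n _ n) subrXX dvdz_mulr. Qed.

Lemma exprN_sign (a : int) n : (- a) ^+ n = (-1) ^+ n * a ^+ n.
Proof. by rewrite -exprMn mulN1r. Qed.

Lemma closed_form2_mul3 j (s : int) :
  3 * (2 ^+ j.+2 * s + ((1 - (-2) ^+ j.+1) %/ 3)%Z) =
  2 ^+ j.+1 * (6 * s + (-1) ^+ j) + 1.
Proof.
have d : ((1 - (-2) ^+ j.+1) %/ 3)%Z * 3 = 1 - (-2) ^+ j.+1.
  exact: divzK (dvdz_1subX (-2) _).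
move: d; rewrite !exprS exprN_sign; lia.
Qed.

Lemma closed_form3_mul2 j (s : int) :
  2 * (3 ^+ j.+2 * s + ((1 - (-3) ^+ j.+1) %/ 2)%Z) =
  3 ^+ j.+1 * (6 * s + (-1) ^+ j) + 1.
Proof.
have d : ((1 - (-3) ^+ j.+1) %/ 2)%Z * 2 = 1 - (-3) ^+ j.+1.
  exact: divzK (dvdz_trans (isT : (2 %| 4)%Z) (dvdz_1subX (-3) _)).
move: d; rewrite !exprS exprN_sign; lia.
Qed.

Theorem mainTheorem18 (L : nat -> nat) (hL : is_l 2 L)
    (n k : nat) (s : int) (hn : (0 < n)%N)
    (h : (L n)%:Z = 2 ^+ k.+1 * s + ((1 - (-2) ^+ k) %/ 3)%Z) :
  (L n.+1)%:Z = 3 ^+ k.+1 * s + ((1 - (-3) ^+ k) %/ 2)%Z.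
Proof.
have Ln_gt0 := is_l_gt0 hL hn; have zero_Ln := pos1_is_l hL hn.
suff [z fz <-] : exists2 z, first_zero_from 2 (L n).+1 z &
    z%:Z = 3 ^+ k.+1 * s + ((1 - (-3) ^+ k) %/ 2)%Z.
  by rewrite (is_l_first_zero hL hn fz).
case: k h => [|j] h.
  rewrite expr0 subrr div0z addr0 in h *.
  have ex : L n = (2 * (L n %/ 2))%N by lia.
  exists (3 * (L n %/ 2))%N; last by lia.
  by rewrite {1}ex; apply: first_zero_after_even; rewrite -?ex //; lia.
have := closed_form2_mul3 j s; rewrite -h => e3x.
have [w ew] : exists w : nat, (w : int) = 6 * s + (-1) ^+ j.
  exists `|(6 * s + (-1) ^+ j)%R|%N; rewrite gez0_abs // ltW //.
  by rewrite -(pmulr_rgt0 _ (exprn_gt0 j.+1 (isT : (0 : int) < 2))); lia.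
rewrite -ew in e3x; have := closed_form3_mul2 j s; rewrite -ew => e2z.
exists ((3 ^ j.+1 * w).+1 %/ 2)%N.
- apply: first_zero_after_odd zero_Ln _ _.
    have := signr_odd int j; case: (odd j) => /= sg; rewrite ?expr0 ?expr1 in sg; lia.
  by have := natrX int 2 j.+1; lia.
- by have := natrX int 3 j.+1; lia.
Qed.
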